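(* Let $A,B$ be idempotent torsion-free $\Gamma$-graded rings and let $F:A\text{-gr}\to B\text{-gr}$ and $G:B\text{-gr}\to A\text{-gr}$ be inverse graded category equivalences. Set $P=G(B)$ and $Q=F(A)$, with right actions $p\cdot b=G(\rho_b)(p)$ for $p\in P$, $b\in B$ and $q\cdot a=F(\rho_a)(q)$ for $q\in Q$, $a\in A$. Then ${}_AP_B$ and ${}_BQ_A$ are graded bimodules, and moreover (i) ${}_AP\in A\text{-gr}$ and $P_B\in\text{gr-}B$; (ii) ${}_BQ\in B\text{-gr}$ and $Q_A\in\text{gr-}A$.
   Context: $\Gamma$ is a fixed multiplicative group. Rings are associative $\Gamma$-graded, not necessarily unital. $A$ is idempotent if $A^2=A$, torsion-free if $Aa=0\Rightarrow a=0$ and $aA=0\Rightarrow a=0$. A graded module is unital if $AM=M$ (right: $MA=M$), torsion-free if $Am=0\Rightarrow m=0$ (right: $mA=0\Rightarrow m=0$). $A\text{-gr}$ (resp. $\text{gr-}A$) is the category of unital torsion-free graded left (resp. right) $A$-modules with degree-preserving maps; note $A\in A\text{-gr}$, $B\in B\text{-gr}$. Suspension: $M(\sigma)_\tau=M_{\tau\sigma}$. A graded functor is an additive functor with $F(M(\sigma))=F(M)(\sigma)$ commuting with suspensions; a graded category equivalence is a graded functor which is an equivalence. A left-linear $f$ is graded of degree $\sigma$ if $f(M_\tau)\subseteq N_{\tau\sigma}$; since $\mathrm{HOM}_A(M,N)_\sigma=\mathrm{Hom}_{A\text{-gr}}(M(\sigma^{-1}),N)$, $F$ induces a map $\mathrm{HOM}_A(M,N)\to\mathrm{HOM}_B(F(M),F(N))$,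 still denoted $F$. For $a\in A$, $\rho_a:A\to A$ is right multiplication $x\mapsto xa$, a graded endomorphism of ${}_AA$; similarly $\rho_b$ for $b\in B$. *)

From HB Require Import structures.
From mathcomp Require Import all_boot all_order all_algebra.
From Stdlib Require List.
Set Implicit Arguments.
Unset Strict Implicit.
Unset Printing Implicit Defensive.
Import GRing.Theory.
Local Open Scope ring_scope.

Record grp := Grp {
  gT :> Type;
  gmul : gT -> gT -> gT;
  g1 : gT;
  ginv : gT -> gT;
  gmulA : forall x y z, gmul x (gmul y z) = gmul (gmul x y) z;
  gmul1g : forall x, gmul g1 x = x;
  gmulg1 : forall x, gmul x g1 = x;
  gmulVg : forall x, gmul (ginv x) x = g1;
  gmulgV : forall x, gmul x (ginv x) = g1 }.

Lemma gmulVK (G : grp) (x s : G) : gmul (gmul x (ginv s)) s = x.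
Proof. by rewrite -gmulA gmulVg gmulg1. Qed.
Lemma gmulKV (G : grp) (x s : G) : gmul (gmul x s) (ginv s) = x.
Proof. by rewrite -gmulA gmulgV gmulg1. Qed.

(* ---------- gradings: M = (+)_s M_s, given by the projections comp s ----------
   x is homogeneous of degree s  iff  comp s x = x  (i.e. x \in M_s).          *)
Definition graded_axioms (G : grp) (M : zmodType) (comp : G -> M -> M)
  (supp : M -> seq G) : Prop :=
  (forall s x y, comp s (x + y) = comp s x + comp s y) /\
  (forall s x, comp s (comp s x) = comp s x) /\
  (forall s t x, s <> t -> comp t (comp s x) = 0) /\
  (forall x, x = \sum_(s <- supp x) comp s x) /\
  (forall x, List.NoDup (supp x)) /\
  (forall s x, ~ List.In s (supp x) -> comp s x = 0).

Record grring (G : grp) := GrRing {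
  rcar :> zmodType;
  rmul : rcar -> rcar -> rcar;
  rcomp : G -> rcar -> rcar;
  rsupp : rcar -> seq G;
  rgraded : graded_axioms rcomp rsupp;
  rmulDl : forall a b c, rmul (a + b) c = rmul a c + rmul b c;
  rmulDr : forall a b c, rmul a (b + c) = rmul a b + rmul a c;
  rmulA : forall a b c, rmul a (rmul b c) = rmul (rmul a b) c;
  rmul_hom : forall s t a b, rcomp s a = a -> rcomp t b = b ->
               rcomp (gmul s t) (rmul a b) = rmul a b }.

Definition ring_idempotent (G : grp) (A : grring G) : Prop :=
  forall a : A, exists l : seq (A * A), a = \sum_(p <- l) rmul p.1 p.2.
Definition torsionfree (G : grp) (A : grring G) : Prop :=
  (forall a : A, (forall x : A, rmul x a = 0) -> a = 0) /\
  (forall a : A, (forall x : A, rmul a x = 0) -> a = 0).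

Definition left_unital (G : grp) (A : grring G) (M : zmodType) (act : A -> M -> M) :=
  forall m : M, exists l : seq (A * M), m = \sum_(p <- l) act p.1 p.2.
Definition left_torsionfree (G : grp) (A : grring G) (M : zmodType)
  (act : A -> M -> M) := forall m : M, (forall a : A, act a m = 0) -> m = 0.

(* ---------- objects of A-gr: unital torsion-free graded left A-modules ---------- *)
Record grmod (G : grp) (A : grring G) := GrMod {
  mcar :> zmodType;
  mact : A -> mcar -> mcar;
  mcomp : G -> mcar -> mcar;
  msupp : mcar -> seq G;
  mgraded : graded_axioms mcomp msupp;
  mactDl : forall (a b : A) m, mact (a + b) m = mact a m + mact b m;
  mactDr : forall (a : A) m n, mact a (m + n) = mact a m + mact a n;
  mactA : forall (a b : A) m, mact (rmul a b) m = mact a (mact b m);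
  mact_hom : forall s t (a : A) m, rcomp s a = a -> mcomp t m = m ->
               mcomp (gmul s t) (mact a m) = mact a m;
  munital : left_unital mact;
  mtf : left_torsionfree mact }.
Arguments mact {G A} M _ _ : rename.
Arguments mcomp {G A} M _ _ : rename.
Arguments msupp {G A} M _ : rename.

Record grhom (G : grp) (A : grring G) (M N : grmod A) := GrHom {
  hfun :> M -> N;
  hadd : forall x y, hfun (x + y) = hfun x + hfun y;
  hlin : forall (a : A) x, hfun (mact M a x) = mact N a (hfun x);
  hdeg : forall t x, mcomp M t x = x -> mcomp N t (hfun x) = hfun x }.

(* ---------- suspension M(s)_t = M_{ts} ---------- *)
Section Susp.
Variables (G : grp) (A : grring G) (M : grmod A) (s : G).

Definition susp_comp (t : G) (x : M) : M := mcomp M (gmul t s) x.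
Definition susp_supp (x : M) : seq G := map (fun r => gmul r (ginv s)) (msupp M x).

Lemma In_seqmap (T U : Type) (f : T -> U) (x : T) (l : seq T) :
  List.In x l -> List.In (f x) (map f l).
Proof. elim: l => //= y l IH [->|H]; [by left | right; exact: IH]. Qed.

Lemma In_seqmap_inv (T U : Type) (f : T -> U) (y : U) (l : seq T) :
  List.In y (map f l) -> exists x, f x = y /\ List.In x l.
Proof.
elim: l => //= x l IH [<-|H]; first by exists x; split; [|left].
by have [z [hz hin]] := IH H; exists z; split; [|right].
Qed.

Lemma NoDup_seqmap (T U : Type) (f : T -> U) (l : seq T) :
  (forall a b, f a = f b -> a = b) -> List.NoDup l -> List.NoDup (map f l).
Proof.
move=> inj; elim: l => [|x l IH] /= H; first by constructor.
inversion H; subst; constructor; last by apply: IH.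
move=> hin; have [z [e hz]] := In_seqmap_inv hin; have ez := inj _ _ e; subst z; contradiction.
Qed.

Lemma susp_graded : graded_axioms susp_comp susp_supp.
Proof.
have [h1 [h2 [h3 [h4 [h5 h6]]]]] := mgraded M.
split; [|split; [|split; [|split; [|split]]]].
- by move=> t x y; apply: h1.
- by move=> t x; apply: h2.
- move=> t u x ne; apply: h3 => e; apply: ne.
  by rewrite -(gmulKV t s) e gmulKV.
- move=> x; rewrite /susp_supp big_map {1}(h4 x); apply: eq_bigr => r _.
  by rewrite /susp_comp gmulVK.
- move=> x; apply: NoDup_seqmap => [a b e|]; last exact: h5.
  by rewrite -(gmulVK a s) e gmulVK.
- move=> t x nin; apply: h6 => hin; apply: nin.
  by rewrite /susp_supp -{1}(gmulKV t s); apply: (In_seqmap (fun r => gmul r (ginv s))).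
Qed.

Lemma susp_act_hom : forall u t (a : A) m, rcomp u a = a -> susp_comp t m = m ->
  susp_comp (gmul u t) (mact M a m) = mact M a m.
Proof.
by move=> u t a m ha hm; rewrite /susp_comp -gmulA; apply: mact_hom.
Qed.

Definition susp : grmod A :=
  @GrMod G A M (mact M) susp_comp susp_supp susp_graded
    (@mactDl G A M) (@mactDr G A M) (@mactA G A M) susp_act_hom
    (@munital G A M) (@mtf G A M).

End Susp.

Section SuspHom.
Variables (G : grp) (A : grring G) (M N : grmod A) (f : grhom M N) (s : G).
Lemma susp_hom_deg : forall t (x : susp M s), mcomp (susp M s) t x = x ->
  mcomp (susp N s) t (f x) = f x.
Proof. by move=> t x; apply: (hdeg f). Qed.
Definition susp_hom : grhom (susp M s) (susp N s) :=
  @GrHom G A (susp M s) (susp N s) (hfun f) (@hadd G A M N f) (@hlin G A M N f)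
    susp_hom_deg.
End SuspHom.

Definition ocast (G : grp) (A : grring G) (M N : grmod A) (e : M = N) (x : M) : N :=
  match e in _ = N' return mcar N' with erefl => x end.

Record grfunctor (G : grp) (A B : grring G) := GrFunctor {
  fobj : grmod A -> grmod B;
  fmor : forall M N : grmod A, grhom M N -> grhom (fobj M) (fobj N);
  fadd : forall M N (f g h : grhom M N), (forall x, h x = f x + g x) ->
           forall y, fmor h y = fmor f y + fmor g y;
  fid : forall M (f : grhom M M), (forall x, f x = x) -> forall y, fmor f y = y;
  fcomp : forall M N L (f : grhom M N) (g : grhom N L) (h : grhom M L),
            (forall x, h x = g (f x)) -> forall y, fmor h y = fmor g (fmor f y);
  fsusp : forall M s, fobj (susp M s) = susp (fobj M) s;
  fsusp_hom : forall M N (f : grhom M N) s (y : fobj (susp M s)),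
      fmor (susp_hom f s) y =
      ocast (esym (fsusp N s)) (fmor f (ocast (fsusp M s) y) : susp (fobj N) s) }.

Definition nat_iso_id (G : grp) (A : grring G) (H : grmod A -> grmod A)
  (Hm : forall M N, grhom M N -> grhom (H M) (H N)) : Prop :=
  exists (eta : forall M, grhom (H M) M) (eta' : forall M, grhom M (H M)),
    [/\ forall M x, eta M (eta' M x) = x,
        forall M x, eta' M (eta M x) = x &
        forall M N (f : grhom M N) x, f (eta M x) = eta N (Hm M N f x)].

Definition inverse_equivalences (G : grp) (A B : grring G)
  (F : grfunctor A B) (H : grfunctor B A) : Prop :=
  @nat_iso_id G A (fun M => fobj H (fobj F M)) (fun M N f => fmor H (fmor F f)) /\
  @nat_iso_id G B (fun M => fobj F (fobj H M)) (fun M N f => fmor F (fmor H f)).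

Section Regular.
Variables (G : grp) (A : grring G) (iA : ring_idempotent A) (tA : torsionfree A).
Definition regmod : grmod A :=
  @GrMod G A A (@rmul G A) (@rcomp G A) (@rsupp G A) (@rgraded G A)
    (@rmulDl G A) (@rmulDr G A) (fun a b m => esym (@rmulA G A a b m))
    (@rmul_hom G A) iA (proj1 tA).

(* rho_c : x |-> x c for c = b_s (the degree-s component of b); a graded map of
   degree s, i.e. a morphism A(s^-1) -> A in A-gr *)
Variables (b : A) (s : G).
Lemma rho_add (x y : A) : rmul (x + y) (rcomp s b) = rmul x (rcomp s b) + rmul y (rcomp s b).
Proof. exact: rmulDl. Qed.
Lemma rho_lin (a x : A) : rmul (rmul a x) (rcomp s b) = rmul a (rmul x (rcomp s b)).
Proof. by rewrite rmulA. Qed.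
Lemma rho_deg : forall t (x : susp regmod (ginv s)),
  mcomp (susp regmod (ginv s)) t x = x ->
  mcomp regmod t (rmul x (rcomp s b)) = rmul x (rcomp s b).
Proof.
move=> t x hx; have [_ [h2 _]] := rgraded A.
by rewrite /= -{1}(gmulVK t s); apply: rmul_hom => //; apply: h2.
Qed.
Definition rho_comp : grhom (susp regmod (ginv s)) regmod :=
  @GrHom G A (susp regmod (ginv s)) regmod (fun x => rmul x (rcomp s b))
    rho_add rho_lin rho_deg.
End Regular.

(* the right action on P = H(A) :  p . b = H(rho_b)(p) = sum_s H(rho_{b_s})(p) *)
Definition ract (G : grp) (A B : grring G) (iA : ring_idempotent A) (tA : torsionfree A)
  (H : grfunctor A B) (p : fobj H (regmod iA tA)) (b : A) : fobj H (regmod iA tA) :=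
  \sum_(s <- rsupp b)
     fmor H (rho_comp iA tA b s)
       (ocast (esym (fsusp H (regmod iA tA) (ginv s))) p).

Definition gr_bimodule (G : grp) (A B : grring G) (P : grmod A)
  (ra : P -> B -> P) : Prop :=
  [/\ forall p q b, ra (p + q) b = ra p b + ra q b,
      forall p (b c : B), ra p (b + c) = ra p b + ra p c,
      forall p (b c : B), ra (ra p b) c = ra p (rmul b c),
      forall s t p (b : B), mcomp P s p = p -> rcomp t b = b ->
        mcomp P (gmul s t) (ra p b) = ra p b &
      forall (a : A) p (b : B), mact P a (ra p b) = ra (mact P a p) b].

Definition right_unital (G : grp) (B : grring G) (M : zmodType) (ra : M -> B -> M) :=
  forall m : M, exists l : seq (M * B), m = \sum_(p <- l) ra p.1 p.2.
Definition right_torsionfree (G : grp) (B : grring G) (M : zmodType)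
  (ra : M -> B -> M) := forall m : M, (forall b : B, ra m b = 0) -> m = 0.

From HB Require Import structures.
From mathcomp Require Import all_boot all_order all_algebra.
From Stdlib Require ListDec.
From Stdlib Require Import Classical ClassicalEpsilon ProofIrrelevance.
From Stdlib Require Import FunctionalExtensionality PropExtensionality.
Set Implicit Arguments.
Unset Strict Implicit.
Unset Printing Implicit Defensive.
Import GRing.Theory.
Local Open Scope ring_scope.

(* A graded functor G : B-gr -> A-gr carries the graded maps rho_b : B(s^-1) -> B, for
   b of degree s, to maps P(s^-1) -> P; these define the right action, and the bimodule
   laws follow from functoriality of G and its compatibility with suspensions.  The
   conditions B = B^2 and "Bb = 0 => b = 0" say that the maps rho_b jointly span B and
   are jointly injective; an equivalence preserves both properties, which gives PB = P
   and "pB = 0 => p = 0".  For the injectivity a homogeneous p is tested through the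
   map a |-> a p out of a suspension of A; for the spanning, P is mapped onto its
   quotient by the saturation of PB. *)

Section Additive.
Variables (U V : zmodType) (f : U -> V).
Hypothesis fD : {morph f : x y / x + y}.

Lemma additive0 : f 0 = 0.
Proof. by apply: (addrI (f 0)); rewrite -fD !addr0. Qed.

Lemma additiveN : {morph f : x / - x}.
Proof. by move=> x; apply: (addrI (f x)); rewrite -fD !subrr additive0. Qed.

Lemma additive_sum (I : Type) (r : seq I) (F : I -> U) :
  f (\sum_(i <- r) F i) = \sum_(i <- r) f (F i).
Proof. exact: (big_morph f fD additive0). Qed.
End Additive.

Lemma sum_In_eq0 (V : zmodType) (I : Type) (r : seq I) (F : I -> V) :
  (forall i, List.In i r -> F i = 0) -> \sum_(i <- r) F i = 0.
Proof.
elim: r => [|i r IHr] F0; first by rewrite big_nil.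
by rewrite big_cons F0 /= ?IHr ?addr0 // => [j rj|]; [apply: F0; right | left].
Qed.

Lemma sum_NoDup1 (V : zmodType) (I : Type) (r : seq I) (F : I -> V) (i0 : I) :
  List.NoDup r -> (forall i, i <> i0 -> F i = 0) -> (~ List.In i0 r -> F i0 = 0) ->
  \sum_(i <- r) F i = F i0.
Proof.
elim: r => [|i r IHr]; first by rewrite big_nil => _ _ ->.
move=> /(@List.NoDup_cons_iff _ i r) [ri uniq_r] F0 Fi0; rewrite big_cons.
have [ei|neq] := classic (i = i0).
  subst i0; rewrite sum_In_eq0 ?addr0 // => j rj.
  by apply: F0 => eji; subst j.
by rewrite F0 // add0r IHr // => ri0; apply: Fi0 => -[/neq|/ri0].
Qed.

Lemma gmulI (Gam : grp) (x : Gam) : injective (gmul x).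
Proof. by move=> y z e; rewrite -(gmul1g y) -(gmul1g z) -(gmulVg x) -!gmulA e. Qed.

Lemma ginvM (Gam : grp) (s u : Gam) : ginv (gmul s u) = gmul (ginv u) (ginv s).
Proof.
have inv_su : gmul (gmul (ginv u) (ginv s)) (gmul s u) = g1 Gam.
  by rewrite gmulA -(gmulA _ (ginv s) s) gmulVg gmulg1 gmulVg.
by rewrite -[LHS]gmul1g -inv_su gmulKV.
Qed.

Section Graded.
Variables (Gam : grp) (M : zmodType) (c : Gam -> M -> M) (supp : M -> seq Gam).
Hypothesis grM : graded_axioms c supp.

Lemma grcompD s : {morph c s : x y / x + y}.
Proof. by case: grM => cD _; apply: cD. Qed.
Lemma grcomp0 s : c s 0 = 0.
Proof. exact: additive0 (grcompD s). Qed.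
Lemma grcompN s : {morph c s : x / - x}.
Proof. exact: additiveN (grcompD s). Qed.
Lemma grcomp_sum s (I : Type) (r : seq I) (F : I -> M) :
  c s (\sum_(i <- r) F i) = \sum_(i <- r) c s (F i).
Proof. exact: (@additive_sum _ _ (c s) (grcompD s)). Qed.
Lemma grcomp_idem s x : c s (c s x) = c s x.
Proof. by case: grM => _ [idem _]. Qed.
Lemma grcomp_orth s t x : s <> t -> c t (c s x) = 0.
Proof. by case: grM => _ [_ [orth _]]; apply: orth. Qed.
Lemma grdecomp x : x = \sum_(s <- supp x) c s x.
Proof. by case: grM => _ [_ [_ [dec _]]]. Qed.
Lemma grsupp_NoDup x : List.NoDup (supp x).
Proof. by case: grM => _ [_ [_ [_ [uniq _]]]]. Qed.
Lemma grcomp_notin s x : ~ List.In s (supp x) -> c s x = 0.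
Proof. by case: grM => _ [_ [_ [_ [_ notin]]]]; apply: notin. Qed.

Lemma grhomog_comp0 s t y : c s y = y -> s <> t -> c t y = 0.
Proof. by move=> <- /grcomp_orth ->. Qed.

Lemma grhomog_compP s t y : c s y = y -> c t y = y \/ c t y = 0.
Proof.
by move=> ys; have [<-|neq] := classic (s = t); [left | right; apply: grhomog_comp0 ys neq].
Qed.
End Graded.

Lemma grcomp_shift (Gam : grp) (M N : zmodType) cM sM cN sN
    (grM : graded_axioms cM sM) (grN : graded_axioms cN sN) (f : M -> N)
    (fD : {morph f : x y / x + y}) (phi : Gam -> Gam) (phi_inj : injective phi) :
  (forall u x, cM u x = x -> cN (phi u) (f x) = f x) ->
  forall t x, cN (phi t) (f x) = f (cM t x).
Proof.
move=> f_deg t x; rewrite {1}(grdecomp grM x) (additive_sum fD) (grcomp_sum grN).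
rewrite (@sum_NoDup1 _ _ _ (fun s => cN (phi t) (f (cM s x))) t (grsupp_NoDup grM x)).
- by rewrite f_deg // (grcomp_idem grM).
- move=> s neq; apply: (grhomog_comp0 grN (s := phi s)).
    by apply: f_deg; rewrite (grcomp_idem grM).
  by move/phi_inj.
- by move=> /(grcomp_notin grM) ->; rewrite (additive0 fD) (grcomp0 grN).
Qed.

Section RingModule.
Variables (Gam : grp) (R : grring Gam) (M : grmod R).

Lemma rmulr0 (x : R) : rmul x 0 = 0.
Proof. exact: additive0 (@rmulDr _ R x). Qed.
Lemma rmul_suml (I : Type) (r : seq I) (F : I -> R) (y : R) :
  rmul (\sum_(i <- r) F i) y = \sum_(i <- r) rmul (F i) y.
Proof. exact: (@additive_sum _ _ (fun x => rmul x y) (fun a b => rmulDl a b y)). Qed.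
Lemma rmul_sumr (I : Type) (r : seq I) (F : I -> R) (x : R) :
  rmul x (\sum_(i <- r) F i) = \sum_(i <- r) rmul x (F i).
Proof. exact: (@additive_sum _ _ (rmul x) (@rmulDr _ R x)). Qed.

Lemma mact0 (a : R) : mact M a 0 = 0.
Proof. exact: additive0 (@mactDr _ _ M a). Qed.
Lemma mactN (a : R) : {morph mact M a : x / - x}.
Proof. exact: additiveN (@mactDr _ _ M a). Qed.
Lemma mact_suml (I : Type) (r : seq I) (F : I -> R) (m : M) :
  mact M (\sum_(i <- r) F i) m = \sum_(i <- r) mact M (F i) m.
Proof. exact: (@additive_sum _ _ (fun a => mact M a m) (fun a b => mactDl a b m)). Qed.
Lemma mact_sumr (I : Type) (r : seq I) (F : I -> M) (a : R) :
  mact M a (\sum_(i <- r) F i) = \sum_(i <- r) mact M a (F i).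
Proof. exact: (@additive_sum _ _ (mact M a) (@mactDr _ _ M a)). Qed.

Lemma mact_shift (a : R) r u (x : M) : rcomp r a = a ->
  mcomp M (gmul r u) (mact M a x) = mact M a (mcomp M u x).
Proof.
move=> ar; apply: (grcomp_shift (mgraded M) (mgraded M) (@mactDr _ _ M a) (@gmulI _ r)).
by move=> v y yv; apply: mact_hom.
Qed.
End RingModule.

Section Homs.
Variables (Gam : grp) (R : grring Gam).
Implicit Types M N : grmod R.

Lemma grhom0 M N (f : grhom M N) : f 0 = 0.
Proof. exact: additive0 (hadd f). Qed.

Lemma grhom_mcomp M N (f : grhom M N) t x : mcomp N t (f x) = f (mcomp M t x).
Proof.
exact: (grcomp_shift (mgraded M) (mgraded N) (hadd f) (phi := id) (fun u v e => e)
          (fun u x => hdeg f (x := x))).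
Qed.

Definition grhom_id M : grhom M M :=
  @GrHom Gam R M M id (fun x y => erefl) (fun a x => erefl) (fun t x h => h).

Section Comp.
Variables (M N L : grmod R) (f : grhom M N) (g : grhom N L).
Lemma comp_hadd x y : g (f (x + y)) = g (f x) + g (f y).
Proof. by rewrite !hadd. Qed.
Lemma comp_hlin a x : g (f (mact M a x)) = mact L a (g (f x)).
Proof. by rewrite !hlin. Qed.
Lemma comp_hdeg t x : mcomp M t x = x -> mcomp L t (g (f x)) = g (f x).
Proof. by move=> xt; apply: hdeg; apply: hdeg. Qed.
Definition grhom_comp : grhom M L :=
  @GrHom Gam R M L (fun x => g (f x)) comp_hadd comp_hlin comp_hdeg.
End Comp.
End Homs.

Lemma cast_irr (T U : Type) (e1 e2 : T = U) (x : T) :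
  eq_rect T (fun X => X) x U e1 = eq_rect T (fun X => X) x U e2.
Proof. by rewrite (proof_irrelevance _ e1 e2). Qed.

Section Casts.
Variables (Gam : grp) (R : grring Gam).
Implicit Types M N : grmod R.

Lemma ocastD M N (e : M = N) : {morph ocast e : x y / x + y}.
Proof. by case: N / e. Qed.
Lemma ocast0 M N (e : M = N) : ocast e 0 = 0.
Proof. by case: N / e. Qed.
Lemma ocast_mact M N (e : M = N) a x : ocast e (mact M a x) = mact N a (ocast e x).
Proof. by case: N / e. Qed.
Lemma ocast_mcomp M N (e : M = N) t x : ocast e (mcomp M t x) = mcomp N t (ocast e x).
Proof. by case: N / e. Qed.
Lemma ocastK M N (e : M = N) : cancel (ocast (esym e)) (ocast e).
Proof. by case: N / e. Qed.
Lemma ocastKV M N (e : M = N) : cancel (ocast e) (ocast (esym e)).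
Proof. by case: N / e. Qed.
Lemma ocastE M N (e : M = N) x :
  ocast e x = eq_rect _ (fun X : Type => X) x _ (f_equal (fun X : grmod R => X : Type) e).
Proof. by case: N / e. Qed.

Lemma grmod_eq (car : zmodType) act c1 c2 s1 s2 gr1 gr2 aDl aDr aA h1 h2 un tf :
  c1 = c2 -> s1 = s2 ->
  @GrMod Gam R car act c1 s1 gr1 aDl aDr aA h1 un tf =
  @GrMod Gam R car act c2 s2 gr2 aDl aDr aA h2 un tf.
Proof. by move=> ec es; subst; f_equal; apply: proof_irrelevance. Qed.

Lemma susp_susp M a b c :
  (forall t, gmul (gmul t b) a = gmul t c) -> susp (susp M a) b = susp M c.
Proof.
move=> abc; apply: grmod_eq.
  by apply: functional_extensionality => t; rewrite /susp_comp /= /susp_comp abc.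
apply: functional_extensionality => x; rewrite /susp_supp /= -map_comp.
apply: eq_map => r /=.
by have := abc (gmul (gmul r (ginv a)) (ginv b)); rewrite !gmulVK => {2}->; rewrite gmulKV.
Qed.

Lemma susp_suspV M a b : (forall t, gmul (gmul t b) a = t) -> susp (susp M a) b = M.
Proof.
case: M => car act c s gr aDl aDr aA h un tf ab; apply: grmod_eq.
  by apply: functional_extensionality => t; rewrite /susp_comp /= /susp_comp ab.
apply: functional_extensionality => x; rewrite /susp_supp /= -map_comp -[RHS]map_id.
by apply: eq_map => r /=; have := ab (gmul (gmul r (ginv a)) (ginv b)); rewrite !gmulVK.
Qed.
End Casts.

Section Functor.
Variables (Gam : grp) (A B : grring Gam) (H : grfunctor A B).
Implicit Types M N : grmod A.

Lemma fmor_ext M N (f g : grhom M N) : f =1 g -> fmor H f =1 fmor H g.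
Proof.
move=> fg y; rewrite (@fcomp _ _ _ H M M N (grhom_id M) g f fg y).
by rewrite (@fid _ _ _ H M (grhom_id M)).
Qed.

Lemma fmor_eq0 M N (f : grhom M N) : f =1 (fun=> 0) -> fmor H f =1 (fun=> 0).
Proof.
move=> f0 y; apply: (addrI (fmor H f y)); rewrite addr0.
by rewrite -(@fadd _ _ _ H M N f f f) // => x; rewrite f0 addr0.
Qed.

Lemma fmor_comp (M N L : grmod A) (f : grhom M N) (g : grhom N L) y :
  fmor H (grhom_comp f g) y = fmor H g (fmor H f y).
Proof. exact: fcomp. Qed.

Lemma fmor_src (X Y N : grmod A) (E : X = Y) (f : grhom X N) (g : grhom Y N) :
  (forall x, f x = g (ocast E x)) ->
  forall y, fmor H f y = fmor H g (ocast (f_equal (fobj H) E) y).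
Proof. by case: Y / E g => g; apply: fmor_ext. Qed.

Lemma fmor_tgt (M X Y : grmod A) (E : X = Y) (f : grhom M X) (g : grhom M Y) :
  (forall x, ocast E (f x) = g x) ->
  forall y, ocast (f_equal (fobj H) E) (fmor H f y) = fmor H g y.
Proof. by case: Y / E g => g; apply: fmor_ext. Qed.
End Functor.

Section Equivalence.
Variables (Gam : grp) (R S : grring Gam) (H : grfunctor S R) (K : grfunctor R S).

Lemma nat_iso_inv (eta : forall M, grhom (fobj K (fobj H M)) M)
    (eta' : forall M, grhom M (fobj K (fobj H M))) :
  (forall M x, eta M (eta' M x) = x) -> (forall M x, eta' M (eta M x) = x) ->
  (forall M N (f : grhom M N) x, f (eta M x) = eta N (fmor K (fmor H f) x)) ->
  forall M N (f : grhom M N) y, fmor K (fmor H f) (eta' M y) = eta' N (f y).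
Proof. by move=> etaK eta'K eta_nat M N f y; rewrite -{2}(etaK M y) eta_nat eta'K. Qed.

Lemma fmor_faithful :
  @nat_iso_id Gam R (fun M => fobj H (fobj K M)) (fun M N f => fmor H (fmor K f)) ->
  forall (M N : grmod R) (u : grhom M N), fmor K u =1 (fun=> 0) -> u =1 (fun=> 0).
Proof.
case=> eta [eta' [etaK _ eta_nat]] M N u Ku0 x.
by rewrite -(etaK M x) eta_nat (fmor_eq0 Ku0) grhom0.
Qed.
End Equivalence.

Section RightAction.
Variables (Gam : grp) (R S : grring Gam) (iS : ring_idempotent S) (tS : torsionfree S).
Variable H : grfunctor S R.

Local Notation regS := (regmod iS tS).
Local Notation P := (fobj H regS).
Local Notation grS := (rgraded S).
Implicit Types (p q : P) (b c : S).

Definition suspV s (p : P) : fobj H (susp regS (ginv s)) :=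
  ocast (esym (fsusp H regS (ginv s))) p.

Definition ract_at s (b : S) (p : P) : P := fmor H (rho_comp iS tS b s) (suspV s p).

Lemma ractE p b : ract p b = \sum_(s <- rsupp b) ract_at s b p.
Proof. by []. Qed.

Lemma ract_atDr s b c p : ract_at s (b + c) p = ract_at s b p + ract_at s c p.
Proof. by apply: fadd => x /=; rewrite (grcompD grS) rmulDr. Qed.

Lemma ract_atDl s b p q : ract_at s b (p + q) = ract_at s b p + ract_at s b q.
Proof. by rewrite /ract_at /suspV ocastD hadd. Qed.

Lemma ract_at_sumr s (I : Type) (r : seq I) (F : I -> S) p :
  ract_at s (\sum_(i <- r) F i) p = \sum_(i <- r) ract_at s (F i) p.
Proof. exact: (@additive_sum _ _ (fun b => ract_at s b p) (fun b c => ract_atDr s b c p)). Qed.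

Lemma ract_at_eq0 s b p : rcomp s b = 0 -> ract_at s b p = 0.
Proof. by move=> b0; apply: fmor_eq0 => x /=; rewrite b0 rmulr0. Qed.

Lemma ract_at_comp s b p : ract_at s (rcomp s b) p = ract_at s b p.
Proof. by apply: fmor_ext => x /=; rewrite (grcomp_idem grS). Qed.

Lemma ract_cover (l : seq Gam) b p :
  List.NoDup l -> (forall s, ~ List.In s l -> rcomp s b = 0) ->
  ract p b = \sum_(s <- l) ract_at s b p.
Proof.
have sum_cover (l' : seq Gam) : List.NoDup l' -> (forall s, ~ List.In s l' -> rcomp s b = 0) ->
    \sum_(s <- l') ract_at s b p = \sum_(t <- rsupp b) ract_at t (rcomp t b) p.
  move=> uniq_l' cover.
  under eq_bigr => s _ do rewrite {1}(grdecomp grS b) ract_at_sumr.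
  rewrite exchange_big /=; apply: eq_bigr => t _.
  apply: sum_NoDup1 => // [s neq|notin]; apply: ract_at_eq0.
    by apply: (grcomp_orth grS) => /esym.
  by rewrite (grcomp_idem grS) cover.
move=> uniq_l cover; rewrite ractE (sum_cover l) // sum_cover //.
  exact: (grsupp_NoDup grS).
by move=> s; apply: (grcomp_notin grS).
Qed.

Lemma ract_homog s b p : rcomp s b = b -> ract p b = ract_at s b p.
Proof.
move=> bs; rewrite (@ract_cover [:: s]) ?big_seq1 //; first by constructor; [|constructor].
by move=> t /= st; apply: (grhomog_comp0 grS bs) => ets; apply: st; left.
Qed.

Lemma ractDr p b c : ract p (b + c) = ract p b + ract p c.
Proof.
have [l [uniq_l sub_l]] :=
  ListDec.uniquify (fun s t : Gam => classic (s = t)) (rsupp b ++ rsupp c).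
have cover (x : S) : (forall s, List.In s (rsupp x) -> List.In s l) ->
    forall s, ~ List.In s l -> rcomp s x = 0.
  by move=> sub s sl; apply: (grcomp_notin grS) => /sub /sl.
have cover_b := cover b (fun s bs => sub_l s (List.in_or_app _ _ s (or_introl bs))).
have cover_c := cover c (fun s cs => sub_l s (List.in_or_app _ _ s (or_intror cs))).
have cover_bc s : ~ List.In s l -> rcomp s (b + c) = 0.
  by move=> sl; rewrite (grcompD grS) cover_b ?cover_c ?addr0.
rewrite (ract_cover _ uniq_l cover_b) (ract_cover _ uniq_l cover_c).
rewrite (ract_cover _ uniq_l cover_bc) -big_split.
by apply: eq_bigr => s _; rewrite ract_atDr.
Qed.

Lemma ractDl p q b : ract (p + q) b = ract p b + ract q b.
Proof. by rewrite !ractE -big_split; apply: eq_bigr => s _; rewrite ract_atDl. Qed.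

Lemma ractNl p b : ract (- p) b = - ract p b.
Proof. exact: (additiveN (fun p q => ractDl p q b)). Qed.

Lemma ract_sumr p (I : Type) (r : seq I) (F : I -> S) :
  ract p (\sum_(i <- r) F i) = \sum_(i <- r) ract p (F i).
Proof. exact: (@additive_sum _ _ (ract p) (ractDr p)). Qed.

Lemma ract_suml b (I : Type) (r : seq I) (F : I -> P) :
  ract (\sum_(i <- r) F i) b = \sum_(i <- r) ract (F i) b.
Proof. exact: (@additive_sum _ _ (fun p => ract p b) (fun p q => ractDl p q b)). Qed.

Lemma mact_ract a p b : mact P a (ract p b) = ract (mact P a p) b.
Proof.
rewrite !ractE mact_sumr; apply: eq_bigr => s _.
by rewrite /ract_at -hlin /suspV ocast_mact.
Qed.

Lemma ract_at_deg s t b p :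
  mcomp P s p = p -> mcomp P (gmul s t) (ract_at t b p) = ract_at t b p.
Proof.
move=> ps; apply: hdeg; rewrite /suspV -ocast_mcomp /=; congr ocast.
by rewrite /susp_comp gmulKV.
Qed.

Lemma ract_deg s t p b :
  mcomp P s p = p -> rcomp t b = b -> mcomp P (gmul s t) (ract p b) = ract p b.
Proof. by move=> ps bt; rewrite (ract_homog _ bt); apply: ract_at_deg. Qed.

(* Both sides are H(x |-> x b c), the left one read through S(s^-1)(u^-1) = S((su)^-1). *)
Lemma ract_atA s u b c p : rcomp s b = b -> rcomp u c = c ->
  ract_at u c (ract_at s b p) = ract_at (gmul s u) (rmul b c) p.
Proof.
move=> bs cu; rewrite /ract_at.
have -> : suspV u (fmor H (rho_comp iS tS b s) (suspV s p)) =
    fmor H (susp_hom (rho_comp iS tS b s) (ginv u))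
      (ocast (esym (fsusp H (susp regS (ginv s)) (ginv u))) (suspV s p)).
  by rewrite fsusp_hom ocastK.
have suspM t : gmul (gmul t (ginv u)) (ginv s) = gmul t (ginv (gmul s u)).
  by rewrite ginvM gmulA.
set E := susp_susp regS suspM.
rewrite -fmor_comp (fmor_src (E := E) (g := rho_comp iS tS (rmul b c) (gmul s u))).
  by congr (fmor H _ _); rewrite /suspV !ocastE !rew_compose; apply: cast_irr.
by move=> x /=; rewrite ocastE (cast_irr _ erefl) /= bs cu rmul_hom // rmulA.
Qed.

Lemma ractA p b c : ract (ract p b) c = ract p (rmul b c).
Proof.
transitivity (\sum_(s <- rsupp b) \sum_(u <- rsupp c)
                 ract (ract p (rcomp s b)) (rcomp u c)).
  rewrite {1}(grdecomp grS b) ract_sumr ract_suml; apply: eq_bigr => s _.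
  by rewrite {1}(grdecomp grS c) ract_sumr.
rewrite {3}(grdecomp grS b) rmul_suml ract_sumr; apply: eq_bigr => s _.
rewrite {3}(grdecomp grS c) rmul_sumr ract_sumr; apply: eq_bigr => u _.
have bs := grcomp_idem grS s b; have cu := grcomp_idem grS u c.
rewrite (ract_homog _ bs) (ract_homog _ cu) (ract_homog (s := gmul s u)) ?ract_atA //.
exact: rmul_hom.
Qed.

Lemma rho_susp_deg b s t (x : regS) : mcomp regS t x = x ->
  mcomp (susp regS s) t (rmul x (rcomp s b)) = rmul x (rcomp s b).
Proof. by move=> xt; apply: rmul_hom => //; apply: (grcomp_idem grS). Qed.

Definition rho_susp b s : grhom regS (susp regS s) :=
  @GrHom Gam S regS (susp regS s) (fun x => rmul x (rcomp s b))
    (rho_add b s) (rho_lin b s) (@rho_susp_deg b s).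

Lemma fmor_rho_susp_eq0 s b p : ract_at s b p = 0 -> fmor H (rho_susp b s) p = 0.
Proof.
set E := susp_suspV regS (fun t => gmulVK t s).
set E1 := f_equal (fobj H) E; set E2 := esym (fsusp H (susp regS s) (ginv s)).
have -> : ract_at s b p = ocast E1 (ocast E2 (fmor H (rho_susp b s) p)).
  rewrite /ract_at -(fmor_tgt (E := E) (f := susp_hom (rho_susp b s) (ginv s))).
    by rewrite fsusp_hom /suspV ocastK.
  by move=> x; rewrite ocastE (cast_irr _ erefl).
by move/(congr1 (ocast (esym E1)))/(congr1 (ocast (esym E2))); rewrite !ocastKV !ocast0.
Qed.
End RightAction.

Section MactMap.
Variables (Gam : grp) (R : grring Gam) (iR : ring_idempotent R) (tR : torsionfree R).
Variables (M : grmod R) (m : M) (t : Gam).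
Hypothesis mt : mcomp M t m = m.

Lemma mact_map_deg u (a : susp (regmod iR tR) (ginv t)) :
  mcomp (susp (regmod iR tR) (ginv t)) u a = a -> mcomp M u (mact M a m) = mact M a m.
Proof. by move=> au; have := mact_hom au mt; rewrite gmulVK. Qed.

Definition mact_map : grhom (susp (regmod iR tR) (ginv t)) M :=
  @GrHom Gam R (susp (regmod iR tR) (ginv t)) M (fun a => mact M a m)
    (fun a b => mactDl a b m) (fun a b => mactA a b m) mact_map_deg.
End MactMap.

Section EquivalenceReflects.
Variables (Gam : grp) (R S : grring Gam) (iR : ring_idempotent R) (tR : torsionfree R).
Variables (H : grfunctor S R) (K : grfunctor R S).
Hypothesis isoS :
  @nat_iso_id Gam S (fun M => fobj K (fobj H M)) (fun M N f => fmor K (fmor H f)).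
Hypothesis isoR :
  @nat_iso_id Gam R (fun M => fobj H (fobj K M)) (fun M N f => fmor H (fmor K f)).

(* For homogeneous q, K kills the map a |-> a q out of a suspension of R because the
   f i are jointly injective; as K is faithful, that map is zero. *)
Lemma fmor_jointly_injective (N : grmod S) (I : Type) (X : I -> grmod S)
    (f : forall i, grhom N (X i)) :
  (forall y, (forall i, f i y = 0) -> y = 0) ->
  forall p : fobj H N, (forall i, fmor H (f i) p = 0) -> p = 0.
Proof.
move=> f_inj p fp0; have [eta [eta' [_ eta'K eta_nat]]] := isoS.
have homog_eq0 t (q : fobj H N) :
    mcomp _ t q = q -> (forall i, fmor H (f i) q = 0) -> q = 0.
  move=> qt fq0.
  have Kact0 : fmor K (mact_map iR tR qt) =1 (fun=> 0).
    move=> w; rewrite -[LHS]eta'K; set y := eta N _.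
    suff -> : y = 0 by rewrite grhom0.
    apply: f_inj => i; rewrite /y eta_nat -fmor_comp.
    rewrite (fmor_eq0 (f := grhom_comp (mact_map iR tR qt) (fmor H (f i)))) ?grhom0 //.
    by move=> a /=; rewrite hlin fq0 mact0.
  by apply: mtf => a; apply: (fmor_faithful isoR Kact0).
rewrite (grdecomp (mgraded _) p); apply: sum_In_eq0 => t _.
apply: (homog_eq0 t); first exact: (grcomp_idem (mgraded _)).
by move=> i; rewrite -grhom_mcomp fp0 (grcomp0 (mgraded _)).
Qed.

Lemma fmor_spanning_eq0 (N : grmod S) (I : Type) (X : I -> grmod S)
    (f : forall i, grhom (X i) N) :
  (forall Z : N -> Prop, Z 0 -> (forall y z, Z y -> Z z -> Z (y + z)) ->
     (forall i x, Z (f i x)) -> forall y, Z y) ->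
  forall (L : grmod R) (u : grhom (fobj H N) L),
  (forall i x, u (fmor H (f i) x) = 0) -> u =1 (fun=> 0).
Proof.
move=> f_span L u uf0; have [eta [eta' [etaK eta'K eta_nat]]] := isoS.
apply: (fmor_faithful isoR) => w; rewrite -(eta'K _ w).
elim/f_span: (eta N w) => [|y z y0 z0|i x]; first by rewrite !grhom0.
  by rewrite !hadd y0 z0 addr0.
rewrite -(nat_iso_inv etaK eta'K eta_nat) -fmor_comp.
by apply: fmor_eq0 => z; apply: uf0.
Qed.
End EquivalenceReflects.

(* sub_sat makes the quotient torsion-free *)
Record satsub (Gam : grp) (R : grring Gam) (M : grmod R) := SatSub {
  sub_mem : M -> Prop;
  sub0 : sub_mem 0;
  subD : forall x y, sub_mem x -> sub_mem y -> sub_mem (x + y);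
  subN : forall x, sub_mem x -> sub_mem (- x);
  sub_mact : forall a x, sub_mem x -> sub_mem (mact M a x);
  sub_mcomp : forall t x, sub_mem x -> sub_mem (mcomp M t x);
  sub_sat : forall x, (forall a, sub_mem (mact M a x)) -> sub_mem x }.

Section Quotient.
Variables (Gam : grp) (R : grring Gam) (M : grmod R) (N : satsub M).

Local Notation qrel x y := (sub_mem N (x - y)).

Lemma qrel_refl x : qrel x x.
Proof. by rewrite subrr; apply: sub0. Qed.
Lemma qrel_sym x y : qrel x y -> qrel y x.
Proof. by move/subN; rewrite opprB. Qed.
Lemma qrel_trans x y z : qrel x y -> qrel y z -> qrel x z.
Proof. by move=> xy /(subD xy); rewrite addrA subrK. Qed.

Definition qrep (x : M) : M := epsilon (inhabits 0) (fun y => qrel x y).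

Lemma qrep_rel x : qrel x (qrep x).
Proof. exact: (epsilon_spec (inhabits 0) (fun y => qrel x y) (ex_intro _ x (qrel_refl x))). Qed.

Lemma qrepP x y : qrep x = qrep y <-> qrel x y.
Proof.
split=> [exy|xy]; first by apply: qrel_trans (qrep_rel x) _; rewrite exy; apply/qrel_sym/qrep_rel.
rewrite /qrep; congr epsilon; apply: functional_extensionality => z.
apply: propositional_extensionality; split; first exact: qrel_trans (qrel_sym xy).
exact: qrel_trans xy.
Qed.

Lemma qrep_idem x : qrep (qrep x) == qrep x.
Proof. by apply/eqP/qrepP/qrel_sym/qrep_rel. Qed.

Definition quot := {x : M | qrep x == x}.
HB.instance Definition _ := Choice.on quot.

Definition qpi (x : M) : quot := exist _ (qrep x) (qrep_idem x).

Lemma qpiP x y : qpi x = qpi y <-> qrel x y.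
Proof. by rewrite -qrepP; split=> [/(congr1 val)|exy] //; apply: val_inj. Qed.

Lemma qpi_val (q : quot) : qpi (val q) = q.
Proof. by apply: val_inj; apply/eqP; case: q. Qed.

Lemma qpi_surj (q : quot) : exists x, q = qpi x.
Proof. by exists (val q); rewrite qpi_val. Qed.

Definition qadd (q r : quot) := qpi (val q + val r).
Definition qopp (q : quot) := qpi (- val q).

Lemma qadd_qpi x y : qadd (qpi x) (qpi y) = qpi (x + y).
Proof.
apply/qpiP; have := subD (qrel_sym (qrep_rel x)) (qrel_sym (qrep_rel y)).
by rewrite opprD addrACA.
Qed.
Lemma qopp_qpi x : qopp (qpi x) = qpi (- x).
Proof. by apply/qpiP; have := subN (qrel_sym (qrep_rel x)); rewrite opprB opprK addrC. Qed.

Lemma qaddA : associative qadd.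
Proof.
move=> q r w; have [x ->] := qpi_surj q; have [y ->] := qpi_surj r.
by have [z ->] := qpi_surj w; rewrite !qadd_qpi addrA.
Qed.
Lemma qaddC : commutative qadd.
Proof.
by move=> q r; have [x ->] := qpi_surj q; have [y ->] := qpi_surj r; rewrite !qadd_qpi addrC.
Qed.
Lemma qadd0 : left_id (qpi 0) qadd.
Proof. by move=> q; have [x ->] := qpi_surj q; rewrite qadd_qpi add0r. Qed.
Lemma qaddN : left_inverse (qpi 0) qopp qadd.
Proof. by move=> q; have [x ->] := qpi_surj q; rewrite qopp_qpi qadd_qpi addNr. Qed.

HB.instance Definition _ := GRing.isZmodule.Build quot qaddA qaddC qadd0 qaddN.

Lemma qpiD : {morph qpi : x y / x + y}.
Proof. by move=> x y; rewrite -qadd_qpi. Qed.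
Lemma qpi0 : qpi 0 = 0.
Proof. by []. Qed.

Lemma qpi_mact a x y : qpi x = qpi y -> qpi (mact M a x) = qpi (mact M a y).
Proof. by move/qpiP=> xy; apply/qpiP; rewrite -mactN -mactDr; apply: sub_mact. Qed.
Lemma qpi_mcomp t x y : qpi x = qpi y -> qpi (mcomp M t x) = qpi (mcomp M t y).
Proof.
move/qpiP=> xy; apply/qpiP.
by rewrite -(grcompN (mgraded M)) -(grcompD (mgraded M)); apply: sub_mcomp.
Qed.

Definition qact (a : R) (q : quot) : quot := qpi (mact M a (val q)).
Definition qcomp t (q : quot) : quot := qpi (mcomp M t (val q)).
Definition qsupp (q : quot) : seq Gam := msupp M (val q).

Lemma qact_qpi a x : qact a (qpi x) = qpi (mact M a x).
Proof. exact/qpi_mact/qpi_val. Qed.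
Lemma qcomp_qpi t x : qcomp t (qpi x) = qpi (mcomp M t x).
Proof. exact/qpi_mcomp/qpi_val. Qed.

Lemma quot_graded : graded_axioms qcomp qsupp.
Proof.
have grM := mgraded M.
split; [|split; [|split; [|split; [|split]]]].
- move=> s q r; have [x ->] := qpi_surj q; have [y ->] := qpi_surj r.
  by rewrite -qpiD !qcomp_qpi (grcompD grM) qpiD.
- by move=> s q; have [x ->] := qpi_surj q; rewrite !qcomp_qpi (grcomp_idem grM).
- by move=> s t q st; have [x ->] := qpi_surj q; rewrite !qcomp_qpi (grcomp_orth grM).
- move=> q; rewrite -[q in LHS]qpi_val {1}(grdecomp grM (val q)).
  exact: (additive_sum qpiD).
- by move=> q; apply: (grsupp_NoDup grM).
- by move=> s q /(grcomp_notin grM); rewrite /qcomp => ->.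
Qed.

Lemma qactDl a b q : qact (a + b) q = qact a q + qact b q.
Proof. by rewrite /qact mactDl qpiD. Qed.
Lemma qactDr a q r : qact a (q + r) = qact a q + qact a r.
Proof.
have [x ->] := qpi_surj q; have [y ->] := qpi_surj r.
by rewrite -qpiD !qact_qpi mactDr qpiD.
Qed.
Lemma qactA a b q : qact (rmul a b) q = qact a (qact b q).
Proof. by have [x ->] := qpi_surj q; rewrite !qact_qpi mactA. Qed.
Lemma qact_hom s t a q : rcomp s a = a -> qcomp t q = q ->
  qcomp (gmul s t) (qact a q) = qact a q.
Proof.
have [x ->] := qpi_surj q; rewrite !qact_qpi !qcomp_qpi => as_ xt.
rewrite (qpi_mcomp _ (qpi_mact a (esym xt))) mact_hom //.
  exact/qpi_mact.
exact: (grcomp_idem (mgraded M)).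
Qed.
Lemma qunital : left_unital qact.
Proof.
move=> q; have [x ->] := qpi_surj q; have [l ->] := munital x.
exists [seq (pr.1, qpi pr.2) | pr <- l].
by rewrite big_map (additive_sum qpiD); apply: eq_bigr => pr _; rewrite qact_qpi.
Qed.
Lemma qtorsionfree : left_torsionfree qact.
Proof.
move=> q; have [x ->] := qpi_surj q => ax0; apply/qpiP; rewrite subr0.
by apply: sub_sat => a; have /qpiP := etrans (esym (qact_qpi a x)) (ax0 a); rewrite subr0.
Qed.

Definition quotmod : grmod R :=
  @GrMod Gam R quot qact qcomp qsupp quot_graded qactDl qactDr qactA qact_hom
    qunital qtorsionfree.

Lemma quot_proj_deg t (x : M) : mcomp M t x = x -> qcomp t (qpi x) = qpi x.
Proof. by rewrite qcomp_qpi => ->. Qed.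

Definition quot_proj : grhom M quotmod :=
  @GrHom Gam R M quotmod qpi qpiD (fun a x => esym (qact_qpi a x)) quot_proj_deg.

Lemma quot_proj_eq0 x : quot_proj x = 0 <-> sub_mem N x.
Proof. by rewrite -qpi0 qpiP subr0. Qed.
End Quotient.

Section RegularImage.
Variables (Gam : grp) (R S : grring Gam) (iR : ring_idempotent R) (tR : torsionfree R).
Variables (iS : ring_idempotent S) (tS : torsionfree S) (H : grfunctor S R) (K : grfunctor R S).
Hypothesis isoS :
  @nat_iso_id Gam S (fun M => fobj K (fobj H M)) (fun M N f => fmor K (fmor H f)).
Hypothesis isoR :
  @nat_iso_id Gam R (fun M => fobj H (fobj K M)) (fun M N f => fmor H (fmor K f)).

Local Notation regS := (regmod iS tS).
Local Notation P := (fobj H regS).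
Local Notation grS := (rgraded S).
Local Notation grP := (mgraded P).
Implicit Types (p q x y : P) (b : S).

Lemma ract_torsionfree : right_torsionfree (@ract Gam S R iS tS H).
Proof.
move=> p p0; apply: (fmor_jointly_injective iR tR isoS isoR
  (f := fun i : S * Gam => rho_susp iS tS i.1 i.2)) => [y y0|[b s]].
  apply: (proj2 tS) => c; rewrite (grdecomp grS c) rmul_sumr.
  by apply: sum_In_eq0 => s _; apply: (y0 (c, s)).
apply: fmor_rho_susp_eq0.
by rewrite -ract_at_comp -(ract_homog _ (grcomp_idem grS s b)) p0.
Qed.

Definition rspan x : Prop := exists l : seq (P * S), x = \sum_(pr <- l) ract pr.1 pr.2.

Lemma rspan0 : rspan 0.
Proof. by exists [::]; rewrite big_nil. Qed.
Lemma rspanD x y : rspan x -> rspan y -> rspan (x + y).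
Proof. by move=> [l1 ->] [l2 ->]; exists (l1 ++ l2); rewrite big_cat. Qed.
Lemma rspanN x : rspan x -> rspan (- x).
Proof.
move=> [l ->]; exists [seq (- pr.1, pr.2) | pr <- l].
by rewrite big_map -sumrN; apply: eq_bigr => pr _; rewrite ractNl.
Qed.
Lemma rspan_ract p b : rspan (ract p b).
Proof. by exists [:: (p, b)]; rewrite big_seq1. Qed.
Lemma rspan_sum (I : Type) (r : seq I) (F : I -> P) :
  (forall i, rspan (F i)) -> rspan (\sum_(i <- r) F i).
Proof. by move=> FP; apply: big_ind => //; [apply: rspan0 | apply: rspanD]. Qed.
Lemma rspan_homog_comp s t x : mcomp P s x = x -> rspan x -> rspan (mcomp P t x).
Proof. by move=> xs xP; have [->|->] := grhomog_compP grP t xs; [|apply: rspan0]. Qed.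

(* the saturation of the graded submodule PB of P *)
Definition rsat x : Prop := forall (a : R) t, rspan (mcomp P t (mact P a x)).

Lemma rsat0 : rsat 0.
Proof. by move=> a t; rewrite mact0 (grcomp0 grP); apply: rspan0. Qed.
Lemma rsatD x y : rsat x -> rsat y -> rsat (x + y).
Proof. by move=> xP yP a t; rewrite mactDr (grcompD grP); apply: rspanD. Qed.
Lemma rsatN x : rsat x -> rsat (- x).
Proof. by move=> xP a t; rewrite mactN (grcompN grP); apply: rspanN. Qed.
Lemma rsat_mact a x : rsat x -> rsat (mact P a x).
Proof. by move=> xP a' t; rewrite -mactA. Qed.
Lemma rsat_mcomp u x : rsat x -> rsat (mcomp P u x).
Proof.
move=> xP a t; rewrite (grdecomp (rgraded R) a) mact_suml (grcomp_sum grP).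
apply: rspan_sum => r; rewrite -(mact_shift (r := r)); last exact: (grcomp_idem (rgraded R)).
exact: rspan_homog_comp (grcomp_idem grP _ _) (xP _ _).
Qed.
Lemma rsat_sat x : (forall a, rsat (mact P a x)) -> rsat x.
Proof.
move=> axP a t; have [l ->] := iR a.
by rewrite mact_suml (grcomp_sum grP); apply: rspan_sum => pr; rewrite mactA; apply: axP.
Qed.

Definition rsat_sub : satsub P := SatSub rsat0 rsatD rsatN rsat_mact rsat_mcomp rsat_sat.

Lemma rsat_ract q s b : rcomp s b = b -> rsat (ract q b).
Proof.
move=> bs a t; rewrite mact_ract (grdecomp grP (mact P a q)) ract_suml (grcomp_sum grP).
apply: rspan_sum => r; apply: (rspan_homog_comp (s := gmul r s)); last exact: rspan_ract.
by apply: ract_deg => //; apply: (grcomp_idem grP).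
Qed.

(* S = S^2 means that the maps x |-> x b_s span S, and every H(rho_{b_s}) lands in PB. *)
Lemma rsat_all p : rsat p.
Proof.
apply/(quot_proj_eq0 rsat_sub); move: p.
apply: (fmor_spanning_eq0 isoS isoR (f := fun i : S * Gam => rho_comp iS tS i.1 i.2)).
  move=> Z Z0 ZD Zf y; have [l ->] := iS y.
  apply: big_ind => // -[a b] _ /=; rewrite (grdecomp grS b) rmul_sumr.
  by apply: big_ind => // s _; apply: (Zf (b, s)).
move=> [b s] z /=; apply/quot_proj_eq0.
have -> : fmor H (rho_comp iS tS b s) z = ract (ocast (fsusp H regS (ginv s)) z) (rcomp s b).
  rewrite (ract_homog _ (grcomp_idem grS s b)) /ract_at /suspV ocastKV.
  by apply: fmor_ext => x /=; rewrite (grcomp_idem grS).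
exact: (rsat_ract _ (grcomp_idem grS s b)).
Qed.

Lemma ract_unital : right_unital (@ract Gam S R iS tS H).
Proof.
move=> p; suff : rspan p by case=> l ->; exists l.
have [l ->] := munital p; apply: rspan_sum => pr.
rewrite (grdecomp grP (mact P pr.1 pr.2)); apply: rspan_sum => t; exact: rsat_all.
Qed.

Lemma regular_image_bimodule :
  gr_bimodule (@ract Gam S R iS tS H) /\
  (left_unital (mact P) /\ left_torsionfree (mact P)) /\
  (right_unital (@ract Gam S R iS tS H) /\ right_torsionfree (@ract Gam S R iS tS H)).
Proof.
split; last split.
- split; [exact: ractDl | exact: ractDr | exact: ractA | | exact: mact_ract].
  by move=> s t p b ps bt; apply: ract_deg.
- by split; [apply: munital | apply: mtf].
- by split; [apply: ract_unital | apply: ract_torsionfree].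
Qed.
End RegularImage.

Theorem proposition3p6 (Gam : grp) (A B : grring Gam)
  (iA : ring_idempotent A) (tA : torsionfree A)
  (iB : ring_idempotent B) (tB : torsionfree B)
  (F : grfunctor A B) (G : grfunctor B A) :
  inverse_equivalences F G ->
  let P : grmod A := fobj G (regmod iB tB) in
  let Q : grmod B := fobj F (regmod iA tA) in
  let actP : P -> B -> P := @ract Gam B A iB tB G in
  let actQ : Q -> A -> Q := @ract Gam A B iA tA F in
  (* _A P_B is a graded bimodule; (i) _A P in A-gr and P_B in gr-B *)
  (@gr_bimodule Gam A B P actP /\
   (left_unital (mact P) /\ left_torsionfree (mact P)) /\
   (right_unital actP /\ right_torsionfree actP)) /\
  (* _B Q_A is a graded bimodule; (ii) _B Q in B-gr and Q_A in gr-A *)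
  (@gr_bimodule Gam B A Q actQ /\
   (left_unital (mact Q) /\ left_torsionfree (mact Q)) /\
   (right_unital actQ /\ right_torsionfree actQ)).
Proof.
move=> [isoA isoB] P Q actP actQ; split.
- exact: (regular_image_bimodule iA tA iB tB isoB isoA).
- exact: (regular_image_bimodule iB tB iA tA isoA isoB).
Qed.
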